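(* Let $r\ge1$ be an integer, $A_N\subset\mathbb{R}$ a finite set, $p_0,q_0$ probability distributions on $(A_N)^r$, and $\epsilon\ge0$, $\alpha\ge0$, $\Delta\ge0$. Then $$\overline{\delta}(\epsilon,\alpha,\Delta)\le\Big\{\overline{d}^{\,2}-(\overline{d}^{\,2}-\Delta^2)\exp\Big(-\frac{\overline{H}(p|p_0)+\alpha\overline{H}(q|q_0)}{\epsilon}\Big)\Big\}^{1/2},$$ where for $\epsilon=0$ the exponential is read as its limit as $\epsilon\downarrow0$.
   Context: $\mathcal{D}(p_0)$ is the set of probability distributions $p$ on pairs $(\vec u,\vec u^0)\in(A_N)^r\times(A_N)^r$ with $\sum_{\vec u}p(\vec u,\vec u^0)=p_0(\vec u^0)$; $\mathcal{D}(q_0)$ likewise for pairs $(\vec v,\vec v^0)$. Under $\mathbb{E}_{p,q}$, $(\vec u,\vec u^0)\sim p$ and $(\vec v,\vec v^0)\sim q$ are independent; $d(p,q)=\{\mathbb{E}_{p,q}|\vec u\cdot\vec v-\vec u^0\cdot\vec v^0|^2\}^{1/2}$; $\phi_\Delta(p,q)=H(p)-H(p_0)+\alpha[H(q)-H(q_0)]+\epsilon\,\mathbb{E}_{p_0,q_0}\log\mathbb{P}_{p,q}\{|\vec u\cdot\vec v-\vec u^0\cdot\vec v^0|\le\Delta\mid\vec u^0,\vec v^0\}$, where $H$ is Shannon entropy (natural log), $(\vec u^0,\vec v^0)\sim p_0\times q_0$ in the outer expectation, and $\vec u\sim p(\cdot|\vec u^0)$, $\vec v\sim q(\cdot|\vec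 v^0)$ independently in the conditional probability. Then $\overline{\delta}(\epsilon,\alpha,\Delta)=\sup\{d(p,q):p\in\mathcal{D}(p_0),q\in\mathcal{D}(q_0),\phi_\Delta(p,q)\ge0\}$. Also $\overline{H}(p|p_0)=\max_{p\in\mathcal{D}(p_0)}H(p)-H(p_0)$, $\overline{H}(q|q_0)=\max_{q\in\mathcal{D}(q_0)}H(q)-H(q_0)$, and $\overline{d}=\max\{|\vec u\cdot\vec v-\vec u^0\cdot\vec v^0|:\vec u,\vec v,\vec u^0,\vec v^0\in(A_N)^r\}$. *)

From HB Require Import structures.
From mathcomp Require Import all_boot all_order all_algebra.
From mathcomp Require Import all_classical all_reals all_analysis.
Set Implicit Arguments. Unset Strict Implicit. Unset Printing Implicit Defensive.
Import Order.TTheory GRing.Theory Num.Theory.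
Import numFieldNormedType.Exports.
Local Open Scope classical_set_scope.
Local Open Scope ring_scope.

Section Defs.
Variables (R : realType) (A : seq R) (r : nat).

Definition vec : finType := {ffun 'I_r -> seq_sub A}.

Definition dot (u v : vec) : R := \sum_(i < r) ssval (u i) * ssval (v i).

Definition is_distr (T : finType) (f : {ffun T -> R}) : Prop :=
  (forall x, 0 <= f x) /\ \sum_x f x = 1.

(* Shannon entropy, natural log; ln 0 is irrelevant since it is multiplied by 0 *)
Definition entropy (T : finType) (f : {ffun T -> R}) : R :=
  - \sum_x f x * ln (f x).

Definition Dset (p0 : {ffun vec -> R}) : set {ffun (vec * vec) -> R} :=
  [set p | is_distr p /\ forall u0 : vec, \sum_(u : vec) p (u, u0) = p0 u0].

Definition dist (p q : {ffun (vec * vec) -> R}) : R :=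
  Num.sqrt (\sum_(x : vec * vec) \sum_(y : vec * vec)
              p x * q y * (dot x.1 y.1 - dot x.2 y.2) ^+ 2).

Definition condprob (p0 q0 : {ffun vec -> R}) (p q : {ffun (vec * vec) -> R})
  (Delta : R) (u0 v0 : vec) : R :=
  \sum_(u : vec) \sum_(v : vec)
     (p (u, u0) / p0 u0) * (q (v, v0) / q0 v0) *
     (if `|dot u v - dot u0 v0| <= Delta then 1 else 0).

Definition eln (x : R) : \bar R := if 0 < x then (ln x)%:E else -oo%E.

Definition phi (eps alpha Delta : R) (p0 q0 : {ffun vec -> R})
  (p q : {ffun (vec * vec) -> R}) : \bar R :=
  (((entropy p - entropy p0) + alpha * (entropy q - entropy q0))%:E
   + eps%:E * (\sum_(u0 : vec) \sum_(v0 : vec)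
                 (p0 u0 * q0 v0)%:E * eln (condprob p0 q0 p q Delta u0 v0)))%E.

Definition deltabar (eps alpha Delta : R) (p0 q0 : {ffun vec -> R}) : R :=
  sup [set x | exists p q, Dset p0 p /\ Dset q0 q /\
                  (0 <= phi eps alpha Delta p0 q0 p q)%E /\ x = dist p q].

Definition Hbar (p0 : {ffun vec -> R}) : R :=
  sup [set x | exists2 p, Dset p0 p & x = entropy p - entropy p0].

Definition dbar : R :=
  \big[Num.max/0]_(u : vec) \big[Num.max/0]_(v : vec)
   \big[Num.max/0]_(u0 : vec) \big[Num.max/0]_(v0 : vec)
     `|dot u v - dot u0 v0|.

Definition expfactor (eps Hs : R) : R :=
  if 0 < eps then expR (- Hs / eps)
  else lim ((fun e : R => expR (- Hs / e)) @ 0^'+).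

End Defs.

From HB Require Import structures.
From mathcomp Require Import all_boot all_order all_algebra.
From mathcomp Require Import all_classical all_reals all_analysis.
From mathcomp Require Import ring lra.
Set Implicit Arguments. Unset Strict Implicit. Unset Printing Implicit Defensive.
Import Order.TTheory GRing.Theory Num.Theory.
Import numFieldNormedType.Exports.
Local Open Scope classical_set_scope.
Local Open Scope ring_scope.

(* Write m = exp (-(Hbar p0 + alpha Hbar q0) / eps) and let Q be the
   probability, under p x q, of the event |u.v - u0.v0| <= Delta.  Averaging
   the tangent-line bound ln c <= c / m - 1 + ln m over (u0, v0) ~ p0 x q0
   turns phi >= 0 into 0 <= eps (Q / m - 1), i.e. Q >= m.  Pointwise,
   |u.v - u0.v0|^2 <= dbar^2 - (dbar^2 - Delta^2) 1{|u.v - u0.v0| <= Delta},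
   so d(p, q)^2 <= dbar^2 - (dbar^2 - Delta^2) Q <= dbar^2 - (dbar^2 - Delta^2) m
   when dbar > Delta; otherwise d(p, q) <= dbar suffices.  For eps = 0 the
   limit m is 0, because Hbar p0 >= ln |(A_N)^r| > 0 as soon as (A_N)^r has
   two points; if it has only one, d(p, q) = 0. *)

Section RealFacts.
Variable R : realType.

Lemma neg_mul_ln_le1 (x : R) : 0 <= x -> - (x * ln x) <= 1.
Proof.
rewrite le_eqVlt => /predU1P[<-|x0]; first by rewrite mul0r oppr0 ler01.
have := @le_ln1Dx R (x^-1 - 1) ltac:(have := invr_gt0 x; lra).
rewrite addrC subrK lnV ?posrE // => hln.
have : x * (- ln x) <= x * (x^-1 - 1) by rewrite ler_wpM2l // ltW.
rewrite mulrBr mulfV ?gt_eqF // mulr1 mulrN; lra.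
Qed.

Lemma ln_le_tangent (m c : R) : 0 < m -> 0 < c -> ln c <= c / m - 1 + ln m.
Proof.
move=> m0 c0; have cm : 0 < c / m by rewrite divr_gt0.
have := @le_ln1Dx R (c / m - 1) ltac:(lra).
rewrite addrC subrK ln_div ?posrE //; lra.
Qed.

Lemma mule_eln_le_tangent (m w c : R) : 0 < m -> 0 <= w -> 0 <= c ->
  (w%:E * eln c <= (w * (c / m - 1 + ln m))%:E)%E.
Proof.
move=> m0 w0 c0; rewrite /eln; case: ifPn => [cp|].
  by rewrite -EFinM lee_fin ler_wpM2l // ln_le_tangent.
rewrite -leNgt => c_le0; have -> : c = 0 by apply/eqP; rewrite eq_le c_le0 c0.
have [->|wn] := eqVneq w 0; first by rewrite mul0e mul0r.
by rewrite mulrNy gtr0_sg ?lt0r ?wn // mul1e leNye.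
Qed.

Lemma sum_mule_eln_le_tangent (I : finType) (w c : I -> R) (m : R) :
  0 < m -> (forall i, 0 <= w i) -> \sum_i w i = 1 -> (forall i, 0 <= c i) ->
  (\sum_i (w i)%:E * eln (c i) <= ((\sum_i w i * c i) / m - 1 + ln m)%:E)%E.
Proof.
move=> m0 w0 w1 c0.
apply: le_trans (_ : \sum_i (w i * (c i / m - 1 + ln m))%:E <= _)%E.
  by apply: lee_sum => i _; exact: mule_eln_le_tangent.
rewrite sumEFin lee_fin le_eqVlt; apply/orP; left; apply/eqP.
under eq_bigr do rewrite mulrDr mulrBr mulr1 mulrA.
by rewrite !big_split /= sumrN -!mulr_suml w1; ring.
Qed.

Lemma expR_neg_div_cvg0 (H : R) : 0 < H -> expR (- H / e) @[e --> 0^'+] --> 0.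
Proof.
move=> H0.
have Vy : e^-1 * H @[e --> 0^'+] --> +oo.
  apply: gt0_cvgMly => //; apply/cvgrVy; first exact: nbhs_right_gt.
  exact: cvg_at_right_filter.
apply: (@cvg_trans _ ((expR (- (e^-1 * H))) @[e --> 0^'+])).
  by apply: near_eq_cvg; near=> e; rewrite mulrC mulNr.
exact: (cvg_comp _ _ Vy (@cvgr_expR R)).
Unshelve. all: end_near. Qed.

Lemma expfactor0 (Hs : R) : 0 < Hs -> expfactor 0 Hs = 0.
Proof.
by move=> Hs0; rewrite /expfactor ltxx; apply: cvg_lim; last exact: expR_neg_div_cvg0.
Qed.

(* [sup] of an empty set is 0, hence the sign condition. *)
Lemma ge0_ge_sup (E : set R) x : 0 <= x -> ubound E x -> sup E <= x.
Proof.
move=> x0 Ex; have [->|/set0P E0] := eqVneq E set0; first by rewrite sup0.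
exact: ge_sup.
Qed.

End RealFacts.

Section Distributions.
Variables (R : realType) (T U : finType).

Lemma entropy_le_card (f : {ffun T -> R}) : is_distr f -> entropy f <= #|T|%:R.
Proof.
move=> [f0 _]; rewrite /entropy -sumrN -sum1_card natr_sum.
by apply: ler_sum => x _; exact: neg_mul_ln_le1.
Qed.

Lemma distr_card_gt0 (f : {ffun T -> R}) : is_distr f -> (0 < #|T|)%N.
Proof.
move=> [_ f1]; rewrite lt0n; apply: contra_eqN f1 => /eqP/card0_eq T0.
by rewrite big_pred0 // eq_sym oner_eq0.
Qed.

Lemma sum_prod_distr (p : {ffun T -> R}) (q : {ffun U -> R}) :
  is_distr p -> is_distr q -> \sum_x \sum_y p x * q y = 1.
Proof.
move=> [_ p1] [_ q1].
by under eq_bigr do rewrite -mulr_sumr q1 mulr1.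
Qed.

Lemma sum_prod_distr_const (p : {ffun T -> R}) (q : {ffun U -> R}) c :
  is_distr p -> is_distr q -> \sum_x \sum_y p x * q y * c = c.
Proof.
move=> hp hq; under eq_bigr do rewrite -mulr_suml.
by rewrite -mulr_suml sum_prod_distr ?mul1r.
Qed.

End Distributions.

Section Couplings.
Variables (R : realType) (A : seq R) (r : nat).
Local Notation V := (vec A r).
Implicit Types (p q : {ffun V * V -> R}).

Lemma sum_pair_snd (F : V * V -> R) : \sum_x F x = \sum_u0 \sum_u F (u, u0).
Proof. by rewrite exchange_big pair_bigA /=; apply: eq_bigr => -[]. Qed.

Lemma Dset_eq0 (p0 : {ffun V -> R}) p u u0 :
  Dset p0 p -> p0 u0 = 0 -> p (u, u0) = 0.
Proof.
move=> [[p_ge0 _] pm] pu0; move: (pm u0); rewrite pu0.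
by move/psumr_eq0P => -> // v _; exact: p_ge0.
Qed.

Lemma Dset_mul_cond (p0 : {ffun V -> R}) p u u0 :
  Dset p0 p -> p0 u0 * (p (u, u0) / p0 u0) = p (u, u0).
Proof.
move=> hp; have [pu0|pu0] := eqVneq (p0 u0) 0.
  by rewrite pu0 mul0r (Dset_eq0 u hp pu0).
by rewrite mulrC divfK.
Qed.

Lemma entropy_sub_le_Hbar (p0 : {ffun V -> R}) p :
  Dset p0 p -> entropy p - entropy p0 <= Hbar p0.
Proof.
move=> hp; apply: ub_le_sup; last by exists p.
exists (#|{: V * V}|%:R - entropy p0) => _ [p' [hp' _] ->].
by rewrite lerD2r entropy_le_card.
Qed.

(* The coupling that draws u uniformly, independently of u0, has conditional
   entropy ln |V|. *)
Lemma ln_card_le_Hbar (p0 : {ffun V -> R}) : is_distr p0 -> ln #|V|%:R <= Hbar p0.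
Proof.
move=> hp0; have [p0_ge0 p0_1] := hp0; set N : R := #|V|%:R.
have N0 : 0 < N by rewrite ltr0n (distr_card_gt0 hp0).
pose p := [ffun x : V * V => p0 x.2 / N].
have sum_uniform u0 (F : R -> R) : \sum_(u : V) F (p (u, u0)) = N * F (p0 u0 / N).
  by under eq_bigr do rewrite ffunE /=; rewrite sumr_const mulr_natl.
have hp : Dset p0 p.
  split; [split|].
  - by move=> x; rewrite ffunE divr_ge0 // ltW.
  - rewrite sum_pair_snd -p0_1; apply: eq_bigr => u0 _.
    by rewrite (sum_uniform u0 id) mulrC divfK ?gt_eqF.
  - by move=> u0; rewrite (sum_uniform u0 id) mulrC divfK ?gt_eqF.
apply: le_trans (entropy_sub_le_Hbar hp); rewrite le_eqVlt; apply/orP; left.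
rewrite /entropy sum_pair_snd opprK addrC -sumrB eq_sym -[ln N]mul1r -p0_1 mulr_suml.
apply/eqP/eq_bigr => u0 _; rewrite (sum_uniform u0 (fun x => x * ln x)).
have [->|pu0] := eqVneq (p0 u0) 0; first by rewrite !mul0r mulr0 subr0.
have pu0_gt0 : 0 < p0 u0 by rewrite lt0r pu0 p0_ge0.
rewrite ln_div ?posrE //; field; exact: lt0r_neq0.
Qed.

Lemma abs_dot_sub_le_dbar (u v u0 v0 : V) : `|dot u v - dot u0 v0| <= dbar A r.
Proof.
apply: le_trans (le_bigmax _ _ u); apply: le_trans (le_bigmax _ _ v).
apply: le_trans (le_bigmax _ _ u0); exact: le_bigmax.
Qed.

Definition gap (x y : V * V) : R := dot x.1 y.1 - dot x.2 y.2.

Definition mean_gap_sqr p q : R := \sum_x \sum_y p x * q y * gap x y ^+ 2.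

Definition joint_prob p q (Delta : R) : R :=
  \sum_x \sum_y p x * q y * (if `|gap x y| <= Delta then 1 else 0).

Lemma gap_sqr_le_dbar x y : gap x y ^+ 2 <= dbar A r ^+ 2.
Proof.
have := abs_dot_sub_le_dbar x.1 y.1 x.2 y.2; rewrite -/(gap x y) => hg.
by rewrite -real_normK ?num_real // lerXn2r ?nnegrE // (le_trans _ hg).
Qed.

Lemma gap_sqr_le_indicator Delta x y :
  gap x y ^+ 2 <= dbar A r ^+ 2 - (dbar A r ^+ 2 - Delta ^+ 2) *
                  (if `|gap x y| <= Delta then 1 else 0).
Proof.
case: ifP => hg; last by rewrite mulr0 subr0 gap_sqr_le_dbar.
rewrite mulr1 opprB addrC subrK -real_normK ?num_real //.
by rewrite lerXn2r ?nnegrE // (le_trans _ hg).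
Qed.

Lemma mean_gap_sqr_le_dbar p q : is_distr p -> is_distr q ->
  mean_gap_sqr p q <= dbar A r ^+ 2.
Proof.
move=> hp hq; have [p_ge0 _] := hp; have [q_ge0 _] := hq.
rewrite -[leRHS](sum_prod_distr_const _ hp hq).
apply: ler_sum => x _; apply: ler_sum => y _.
by rewrite ler_wpM2l ?mulr_ge0 ?gap_sqr_le_dbar.
Qed.

Lemma mean_gap_sqr_le_joint_prob p q Delta : is_distr p -> is_distr q ->
  mean_gap_sqr p q <= dbar A r ^+ 2 - (dbar A r ^+ 2 - Delta ^+ 2) * joint_prob p q Delta.
Proof.
move=> hp hq; have [p_ge0 _] := hp; have [q_ge0 _] := hq.
rewrite -[X in X - _](sum_prod_distr_const _ hp hq) /joint_prob mulr_sumr -sumrB.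
apply: ler_sum => x _; rewrite mulr_sumr -sumrB; apply: ler_sum => y _.
rewrite [_ * (p x * _ * _)]mulrCA -mulrBr ler_wpM2l ?mulr_ge0 //.
exact: gap_sqr_le_indicator.
Qed.

Lemma mean_gap_sqr_card_le1 p q : (#|V| <= 1)%N -> mean_gap_sqr p q = 0.
Proof.
move/card_le1_eqP => V_eq; apply: big1 => x _; apply: big1 => y _.
by rewrite /gap (V_eq x.1 x.2) ?inE // (V_eq y.1 y.2) ?inE // subrr expr0n mulr0.
Qed.

Lemma joint_prob_ge0 p q Delta : is_distr p -> is_distr q -> 0 <= joint_prob p q Delta.
Proof.
move=> [p_ge0 _] [q_ge0 _]; apply: sumr_ge0 => x _; apply: sumr_ge0 => y _.
by apply: mulr_ge0; [rewrite mulr_ge0 | case: ifP].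
Qed.

Lemma condprob_ge0 (p0 q0 : {ffun V -> R}) p q Delta u0 v0 :
  is_distr p0 -> is_distr q0 -> Dset p0 p -> Dset q0 q ->
  0 <= condprob p0 q0 p q Delta u0 v0.
Proof.
move=> [p0_ge0 _] [q0_ge0 _] [[p_ge0 _] _] [[q_ge0 _] _].
apply: sumr_ge0 => u _; apply: sumr_ge0 => v _.
by apply: mulr_ge0; [rewrite mulr_ge0 ?divr_ge0 | case: ifP].
Qed.

Lemma mean_condprob_eq_joint_prob (p0 q0 : {ffun V -> R}) p q Delta :
  Dset p0 p -> Dset q0 q ->
  \sum_u0 \sum_v0 p0 u0 * q0 v0 * condprob p0 q0 p q Delta u0 v0 =
  joint_prob p q Delta.
Proof.
move=> hp hq; rewrite /joint_prob sum_pair_snd; apply: eq_bigr => u0 _.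
under [RHS]eq_bigr do rewrite sum_pair_snd.
rewrite [RHS]exchange_big; apply: eq_bigr => v0 _.
rewrite /condprob mulr_sumr; apply: eq_bigr => u _.
rewrite mulr_sumr; apply: eq_bigr => v _.
rewrite -[in RHS](Dset_mul_cond u u0 hp) -[in RHS](Dset_mul_cond v v0 hq) /gap /=; ring.
Qed.

Section EntropicConstraint.
Variables (p0 q0 : {ffun V -> R}) (eps alpha Delta : R).
Hypotheses (hp0 : is_distr p0) (hq0 : is_distr q0) (alpha_ge0 : 0 <= alpha).

Lemma phi_le_tangent p q m : 0 <= eps -> 0 < m -> Dset p0 p -> Dset q0 q ->
  (phi eps alpha Delta p0 q0 p q <=
   (Hbar p0 + alpha * Hbar q0 + eps * (joint_prob p q Delta / m - 1 + ln m))%:E)%E.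
Proof.
move=> eps_ge0 m0 hp hq; have [p0_ge0 _] := hp0; have [q0_ge0 _] := hq0.
rewrite /phi [X in (_ <= X)%E]EFinD [(eps * _)%:E]EFinM; apply: leeD.
  rewrite lee_fin lerD ?entropy_sub_le_Hbar // ler_wpM2l //.
  exact: entropy_sub_le_Hbar.
apply: lee_wpmul2l; first by rewrite lee_fin.
rewrite pair_bigA -(mean_condprob_eq_joint_prob Delta hp hq) pair_bigA /=.
apply: sum_mule_eln_le_tangent => //.
- by move=> x; rewrite mulr_ge0.
- by rewrite -(pair_bigA _ (fun u0 v0 => p0 u0 * q0 v0)) sum_prod_distr.
- by move=> x; exact: condprob_ge0.
Qed.

Lemma expR_le_joint_prob p q : 0 < eps -> Dset p0 p -> Dset q0 q ->
  (0 <= phi eps alpha Delta p0 q0 p q)%E ->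
  expR (- (Hbar p0 + alpha * Hbar q0) / eps) <= joint_prob p q Delta.
Proof.
move=> eps_gt0 hp hq phi_ge0; set Hs := _ + _; set m := expR _.
have m0 : 0 < m := expR_gt0 _.
have ln_m : ln m = - Hs / eps by rewrite expRK.
have := le_trans phi_ge0 (phi_le_tangent (ltW eps_gt0) m0 hp hq).
rewrite lee_fin ln_m.
have -> : Hs + eps * (joint_prob p q Delta / m - 1 + - Hs / eps) =
          eps * (joint_prob p q Delta / m - 1).
  by field; rewrite !gt_eqF.
by rewrite (pmulr_rge0 _ eps_gt0) subr_ge0 ler_pdivlMr // mul1r.
Qed.

Lemma Hbar_sum_gt0 : (1 < #|V|)%N -> 0 < Hbar p0 + alpha * Hbar q0.
Proof.
move=> V_gt1; have lnV_gt0 : 0 < ln (#|V|%:R : R) by rewrite ln_gt0 // ltr1n.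
have Hp_gt0 := lt_le_trans lnV_gt0 (ln_card_le_Hbar hp0).
have Hq_gt0 := lt_le_trans lnV_gt0 (ln_card_le_Hbar hq0).
by rewrite ltr_wpDr ?mulr_ge0 // ltW.
Qed.

Lemma expfactor_le_joint_prob p q : 0 <= eps -> (1 < #|V|)%N ->
  Dset p0 p -> Dset q0 q -> (0 <= phi eps alpha Delta p0 q0 p q)%E ->
  0 <= expfactor eps (Hbar p0 + alpha * Hbar q0) <= joint_prob p q Delta.
Proof.
move=> eps_ge0 V_gt1 hp hq phi_ge0; rewrite le_eqVlt in eps_ge0.
case/predU1P: eps_ge0 => [<-|eps_gt0].
  by rewrite expfactor0 ?Hbar_sum_gt0 // lexx (joint_prob_ge0 _ (proj1 hp) (proj1 hq)).
by rewrite /expfactor eps_gt0 expR_ge0 expR_le_joint_prob.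
Qed.

Lemma dist_le_bound p q : 0 <= eps -> Dset p0 p -> Dset q0 q ->
  (0 <= phi eps alpha Delta p0 q0 p q)%E ->
  dist p q <= Num.sqrt (dbar A r ^+ 2 - (dbar A r ^+ 2 - Delta ^+ 2) *
                        expfactor eps (Hbar p0 + alpha * Hbar q0)).
Proof.
move=> eps_ge0 hp hq phi_ge0; have [pd _] := hp; have [qd _] := hq.
change (dist p q) with (Num.sqrt (mean_gap_sqr p q)).
have [V_le1|V_gt1] := leqP #|V| 1.
  by rewrite mean_gap_sqr_card_le1 // sqrtr0 sqrtr_ge0.
have /andP[e_ge0 e_le] := expfactor_le_joint_prob eps_ge0 V_gt1 hp hq phi_ge0.
apply: ler_wsqrtr; have [dbar_le|dbar_gt] := lerP (dbar A r ^+ 2) (Delta ^+ 2).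
  apply: le_trans (mean_gap_sqr_le_dbar pd qd) _; nra.
apply: le_trans (mean_gap_sqr_le_joint_prob Delta pd qd) _; nra.
Qed.

End EntropicConstraint.

End Couplings.

Theorem proposition4 (R : realType) (A : seq R) (r : nat)
  (p0 q0 : {ffun vec A r -> R}) (eps alpha Delta : R) :
  (1 <= r)%N -> is_distr p0 -> is_distr q0 ->
  0 <= eps -> 0 <= alpha -> 0 <= Delta ->
  deltabar eps alpha Delta p0 q0 <=
  Num.sqrt (dbar A r ^+ 2 - (dbar A r ^+ 2 - Delta ^+ 2) *
            expfactor eps (Hbar p0 + alpha * Hbar q0)).
Proof.
move=> _ hp0 hq0 eps_ge0 alpha_ge0 _.
apply: ge0_ge_sup; first exact: sqrtr_ge0.
by move=> _ [p [q [hp [hq [phi_ge0 ->]]]]]; exact: dist_le_bound.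
Qed.
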